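(* Let $V$ be a finite nonempty set and $f:\{0,1\}^V\to\{0,1\}^V$ an and-net. If for every $1\le k\le |V|$ there are at most $2^k-1$ points $x\in\{0,1\}^V$ such that $Gf(x)$ has a chordless positive cycle of length $k$, then $f$ has at most one fixed point.
   Context: For $x^{j\alpha}$ the point equal to $x$ except its $j$-component is $\alpha$, the local interaction graph $Gf(x)$ is the signed digraph on $V$ with a positive arc from $j$ to $i$ if $f_i(x^{j1})-f_i(x^{j0})=1$ and a negative arc if it equals $-1$; the global interaction graph $G(f)$ has a positive (resp. negative) arc from $j$ to $i$ iff such an arc exists in $Gf(x)$ for at least one $x$. $f$ is an and-net if $G(f)$ has at most one arc from $j$ to $i$ for all $i,j$ and for every $i$ and $x$: $f_i(x)=1$ iff $G(f)$ has no positive arc $j\to i$ with $x_j=0$ and no negative arc $j\to i$ with $x_j=1$. A cycle of a signed digraph $G$ is a subgraph whose underlying unsigned digraph is a directed cycle (length = number of arcs); positive if it has an even number of negative arcs; chordless if its underlying unsigned digraph is an induced subgraph of the underlying unsigned digraph of $G$. *)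

From mathcomp Require Import all_boot.
Set Implicit Arguments. Unset Strict Implicit. Unset Printing Implicit Defensive.

Section BoolNets.
Variable V : finType.

Definition conf := {ffun V -> bool}.

Definition upd (x : conf) (j : V) (a : bool) : conf :=
  [ffun i => if i == j then a else x i].

Variable f : conf -> conf.

(* local interaction graph Gf(x): positive arc j -> i iff f_i(x^{j1}) - f_i(x^{j0}) = 1 *)
Definition lpos (x : conf) (j i : V) : bool :=
  f (upd x j true) i && ~~ f (upd x j false) i.
Definition lneg (x : conf) (j i : V) : bool :=
  ~~ f (upd x j true) i && f (upd x j false) i.
Definition larc (x : conf) (j i : V) : bool := lpos x j i || lneg x j i.

Definition gpos (j i : V) : bool := [exists x, lpos x j i].
Definition gneg (j i : V) : bool := [exists x, lneg x j i].

Definition and_net : Prop :=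
  (forall i j : V, ~~ (gpos j i && gneg j i)) /\
  (forall (i : V) (x : conf),
     f x i = [forall j, ~~ (gpos j i && ~~ x j) && ~~ (gneg j i && x j)]).

(* Since Gf(x) has at most one arc from j to i, the cycle subgraph is
   determined by c. *)
Definition is_cycle (x : conf) (c : seq V) : bool :=
  (0 < size c) && uniq c && cycle (larc x) c.

Definition positive_cycle (x : conf) (c : seq V) : bool :=
  ~~ odd (count (fun u => lneg x u (next c u)) c).

Definition chordless (x : conf) (c : seq V) : bool :=
  all (fun u => all (fun v => larc x u v ==> (v == next c u)) c) c.

Definition has_chordless_pos_cycle (x : conf) (k : nat) : bool :=
  [exists c : k.-tuple V,
     [&& is_cycle x c, positive_cycle x c & chordless x c]].

Definition fixed_point (x : conf) : bool := f x == x.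

End BoolNets.

(* Two distinct fixed points x and y of an and-net differ on a set D in which
   every vertex i has an in-neighbour in G(f): some literal of the conjunction
   f_i must separate x from y.  A graph-theoretic induction on |D| yields a
   cycle c inside D which is chordless in G(f) and such that every vertex of D
   outside c sends its arcs into c only towards vertices on which x takes one
   value.  Freeze each vertex l outside c at the value that makes the literal
   of l true at its out-neighbours on c (read from x or from y); then each of
   the 2^|c| configurations obtained by varying the vertices of c turns c into
   a chordless cycle of the local graph, positive since its arc signs record
   the changes of x along c. *)

From mathcomp Require Import all_boot.
Set Implicit Arguments. Unset Strict Implicit. Unset Printing Implicit Defensive.

Section InducedCycles.
Variables (V : finType) (E : rel V).

Definition in_nbrs (S : {set V}) (i : V) := [set l in S | E l i].
Definition lone (S : {set V}) (i : V) := #|in_nbrs S i| <= 1.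
Definition has_in_nbrs (S : {set V}) := forall i, i \in S -> exists2 l, l \in S & E l i.

Definition simple_cycle (P : {set V}) (c : seq V) :=
  [/\ 0 < size c, uniq c, {subset c <= P} & cycle E c].
Definition chordfree (c : seq V) := {in c &, forall u v, E u v -> v = next c u}.
Definition uniform_entries (col : V -> bool) (S : {set V}) (c : seq V) :=
  forall l i j, l \in S -> l \notin c -> i \in c -> j \in c -> E l i -> E l j ->
  col i = col j.
Definition good_cycle col S c :=
  [/\ simple_cycle S c, chordfree c & uniform_entries col S c].

Definition false_or_lone (col : V -> bool) (S : {set V}) :=
  [set i in S | ~~ col i || lone S i].

Definition misses_false_or_lone col S v := [forall w in false_or_lone col S, ~~ E v w].

Lemma false_or_lone_sub col S : false_or_lone col S \subset S.
Proof. by apply/subsetP => i; rewrite inE => /andP[]. Qed.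

Lemma simple_cycle_sub (P Q : {set V}) c :
  P \subset Q -> simple_cycle P c -> simple_cycle Q c.
Proof. by move=> /subsetP PQ [c_gt0 c_uniq cP c_cycle]; split=> // u /cP /PQ. Qed.

Lemma exists_simple_cycle (S P : {set V}) :
  S != set0 -> P \subset S -> (forall v, v \in S -> exists2 w, w \in P & E v w) ->
  exists c, simple_cycle P c.
Proof.
move=> /set0Pn[s sS] /subsetP PS outP.
pose g v := odflt v [pick w in P | E v w].
have gP v : v \in S -> (g v \in P) && E v (g v).
  move=> /outP[w wP Evw]; rewrite /g; case: pickP => [w' /andP[-> ->] //|/(_ w)].
  by rewrite wP Evw.
have iterS n : iter n g s \in S.
  by elim: n => //= n IH; case/andP: (gP _ IH) => /PS.
have [i lt_i_order iter_order] := trajectP (looping_order g s).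
set w := iter i g s.
have w_returns : exists k, iter k.+1 g w = w.
  exists (order g s - i).-1; rewrite prednK ?subn_gt0 // /w -iterD subnK //.
  exact: ltnW.
have orbit_fcycle : fcycle g (orbit g w) := all_iffLR orbitPcycle 3 0 w_returns.
have orbitS : {subset orbit g w <= S}.
  by move=> y; rewrite -fconnect_orbit => /iter_findex <-; rewrite /w -iterD.
exists (orbit g w); split.
- by rewrite size_orbit order_gt0.
- exact: orbit_uniq.
- move=> y y_orbit; rewrite -(eqP (prev_cycle orbit_fcycle y_orbit)).
  have prev_y_S : prev (orbit g w) y \in S by apply: orbitS; rewrite mem_prev.
  by case/andP: (gP _ prev_y_S).
- apply: (sub_in_cycle (P := mem S) (e := frel g)) orbit_fcycle; last first.
    exact/allP.
  by move=> a b aS _ /eqP <-; case/andP: (gP _ aS).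
Qed.

Lemma lone_prev (S : {set V}) (c : seq V) l i :
  {subset c <= S} -> cycle E c -> l \in S -> i \in c -> E l i -> lone S i ->
  l = prev c i.
Proof.
move=> cS c_cycle lS ic Eli /card_le1_eqP; apply; rewrite inE ?lS ?Eli //.
by rewrite cS ?mem_prev //= (prev_cycle c_cycle ic).
Qed.

Lemma uniform_entries_false_or_lone col (S : {set V}) (c : seq V) :
  simple_cycle (false_or_lone col S) c -> uniform_entries col S c.
Proof.
move=> [_ _ cF c_cycle].
have cS : {subset c <= S} by move=> u /cF; rewrite inE => /andP[].
suff entry_false i l : l \in S -> l \notin c -> i \in c -> E l i -> col i = false.
  by move=> l i j lS lc ic jc Eli Elj; rewrite (entry_false i l) ?(entry_false j l).
move=> lS lc ic Eli; have := cF _ ic; rewrite inE => /andP[_ /orP[/negbTE //|i_lone]].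
by move: lc; rewrite (lone_prev cS c_cycle lS ic Eli i_lone) mem_prev ic.
Qed.

Lemma uniform_entries_negb col (S : {set V}) (c : seq V) :
  uniform_entries (negb \o col) S c <-> uniform_entries col S c.
Proof.
split=> col_eq l i j lS lc ic jc Eli Elj; last by rewrite /= (col_eq l i j).
by apply: negb_inj; apply: (col_eq l).
Qed.

Lemma good_cycle_negb col (S : {set V}) (c : seq V) :
  good_cycle (negb \o col) S c <-> good_cycle col S c.
Proof. by split=> -[? ?] /uniform_entries_negb. Qed.

Lemma good_cycle_lone col (S : {set V}) (c : seq V) :
  {in S, forall i, lone S i} -> simple_cycle S c -> good_cycle col S c.
Proof.
move=> S_lone [c_gt0 c_uniq cS c_cycle]; split=> //.
  move=> u v uc vc Euv.
  by rewrite (lone_prev cS c_cycle (cS _ uc) vc Euv (S_lone _ (cS _ vc))) next_prev.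
move=> l i j lS lc ic jc Eli _.
by move: lc; rewrite (lone_prev cS c_cycle lS ic Eli (S_lone _ (cS _ ic))) mem_prev ic.
Qed.

Lemma simple_cycle_has_in_nbrs (P : {set V}) (c : seq V) :
  simple_cycle P c -> [set u in c] != set0 /\ has_in_nbrs [set u in c].
Proof.
case: c => [[]//|u c] [_ _ _ c_cycle].
split; first by apply/set0Pn; exists u; rewrite inE mem_head.
move=> i; rewrite inE => ic; exists (prev (u :: c) i); first by rewrite inE mem_prev.
exact: prev_cycle.
Qed.

Section DeleteVertex.
Variables (col : V -> bool) (S : {set V}) (v : V).
Hypotheses (vS : v \in S) (v_out : misses_false_or_lone col S v).

Lemma has_in_nbrs_setD1 : has_in_nbrs S -> S :\ v != set0 /\ has_in_nbrs (S :\ v).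
Proof.
move=> S_in.
have in_nbr_not_v i : i \in S -> exists2 l, l \in S :\ v & E l i.
  move=> iS; have [Evi | nEvi] := boolP (E v i); last first.
    have [l lS Eli] := S_in i iS; exists l => //.
    by rewrite in_setD1 lS andbT; apply: contraNneq nEvi => <-.
  have i_not_lone : ~~ lone S i.
    by apply: contraL Evi => i_lone; apply: (forall_inP v_out); rewrite inE iS i_lone orbT.
  have : 0 < #|in_nbrs S i :\ v|.
    move: i_not_lone; rewrite /lone -ltnNge (cardsD1 v).
    by case: (_ \in _); [rewrite add1n ltnS | rewrite add0n => /ltnW].
  case/card_gt0P => l; rewrite in_setD1 inE => /and3P[lv lS Eli].
  by exists l; rewrite ?in_setD1 ?lv.
split; last by move=> i /setD1P[_ /in_nbr_not_v].
by have [l lSv _] := in_nbr_not_v v vS; apply/set0Pn; exists l.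
Qed.

Lemma good_cycle_setD1 c : good_cycle col (S :\ v) c -> good_cycle col S c.
Proof.
move=> [[c_gt0 c_uniq cSv c_cycle] c_chordfree c_unif].
have cS : {subset c <= S} by move=> u /cSv /setD1P[].
have entry_true i : i \in c -> E v i -> col i.
  move=> ic; apply: contraLR => /negPf col_i; apply: (forall_inP v_out).
  by rewrite inE cS //= col_i.
split=> // l i j lS lc ic jc Eli Elj.
have [l_v | l_v] := eqVneq l v; first by subst l; rewrite !entry_true.
by apply: (c_unif l); rewrite ?in_setD1 ?l_v.
Qed.

End DeleteVertex.

Lemma exists_simple_cycle_false_or_lone col (S : {set V}) :
  S != set0 -> ~~ [exists v in S, misses_false_or_lone col S v] ->
  exists c, simple_cycle (false_or_lone col S) c.
Proof.
move=> S0 no_sink; apply: exists_simple_cycle S0 (false_or_lone_sub col S) _ => v vS.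
have /exists_inPn/(_ v vS)/forall_inPn[w wF Evw] := no_sink.
by exists w; rewrite // -[E v w]negbK.
Qed.

Lemma good_cycle_shrink col (S : {set V}) (c : seq V) :
  (forall T : {set V}, #|T| < #|S| -> T != set0 -> has_in_nbrs T ->
     exists c', good_cycle col T c') ->
  simple_cycle (false_or_lone col S) c ->
  (exists c', good_cycle col S c') \/ S \subset false_or_lone col S.
Proof.
move=> IH c_simple; have FS := false_or_lone_sub col S.
have [c0 c_in] := simple_cycle_has_in_nbrs c_simple.
have cF : [set u in c] \subset false_or_lone col S.
  by case: c_simple => _ _ cF _; apply/subsetP => u; rewrite inE => /cF.
have [c_lt | c_ge] := ltnP #|[set u in c]| #|S|; last first.
  have /eqP c_S : [set u in c] == S by rewrite eqEcard c_ge (subset_trans cF).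
  by right; rewrite -{1}c_S.
have [c' [c'_simple c'_chordfree _]] := IH _ c_lt c0 c_in.
left; exists c'; have c'_simple_F := simple_cycle_sub cF c'_simple.
split=> //; first exact: simple_cycle_sub FS c'_simple_F.
exact: uniform_entries_false_or_lone.
Qed.

Lemma exists_good_cycle col (S : {set V}) :
  S != set0 -> has_in_nbrs S -> exists c, good_cycle col S c.
Proof.
move: {2}#|S| (leqnn #|S|) => n; elim: n => [|n IH] in col S *.
  by rewrite leqn0 cards_eq0 => /eqP ->; rewrite eqxx.
move=> S_le S0 S_in.
(* Either some vertex of S can be deleted (its arcs into any later cycle hit
   only one colour), or S contains cycles through false_or_lone for both
   colourings; these are proper subsets of S unless all in-degrees are one. *)
have IHS col' (T : {set V}) : #|T| < #|S| -> T != set0 -> has_in_nbrs T ->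
    exists c, good_cycle col' T c.
  by move=> T_lt; apply: IH; rewrite -ltnS (leq_trans T_lt).
have delete_case col' : [exists v in S, misses_false_or_lone col' S v] ->
    exists c, good_cycle col' S c.
  case/exists_inP => v vS v_out; have [Sv0 Sv_in] := has_in_nbrs_setD1 vS v_out S_in.
  have [c c_good] := IHS col' _ (proper_card (properD1 vS)) Sv0 Sv_in.
  by exists c; apply: good_cycle_setD1 c_good.
have [/delete_case //|no_sink_col] := boolP [exists v in S, misses_false_or_lone col S v].
have [/delete_case[c /good_cycle_negb]|no_sink_negb] :=
  boolP [exists v in S, misses_false_or_lone (negb \o col) S v]; first by exists c.
have [cA cA_simple] := exists_simple_cycle_false_or_lone S0 no_sink_col.
have [cO cO_simple] := exists_simple_cycle_false_or_lone S0 no_sink_negb.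
case: (good_cycle_shrink (IHS col) cA_simple) => [// | /subsetP S_col].
case: (good_cycle_shrink (IHS _) cO_simple) => [[c /good_cycle_negb] | /subsetP S_negb].
  by exists c.
exists cA; apply: good_cycle_lone (simple_cycle_sub (false_or_lone_sub _ _) cA_simple).
move=> i iS; move: (S_col _ iS) (S_negb _ iS); rewrite !inE /= negbK.
by rewrite iS; case: (col i).
Qed.

End InducedCycles.

Lemma odd_count_addb (T : Type) (a b : pred T) (s : seq T) :
  odd (count (fun u => a u (+) b u) s) = odd (count a s) (+) odd (count b s).
Proof.
elim: s => //= u s IH; rewrite !oddD IH.
by case: (a u); case: (b u); case: (odd (count a s)); case: (odd (count b s)).
Qed.

Lemma count_comp_next (T : eqType) (a : pred T) (c : seq T) :
  uniq c -> count (a \o next c) c = count a c.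
Proof.
move=> c_uniq; rewrite -count_map; apply/permP/uniq_perm => //.
  by rewrite (map_inj_uniq (can_inj (prev_next c_uniq))).
move=> u; apply/mapP/idP => [[w wc ->] | uc]; first by rewrite mem_next.
by exists (prev c u); rewrite ?mem_prev ?next_prev.
Qed.

Lemma even_count_next_change (T : eqType) (h : pred T) (c : seq T) :
  uniq c -> ~~ odd (count (fun u => h u != h (next c u)) c).
Proof.
move=> c_uniq; rewrite (eq_count (a2 := fun u => h u (+) (h \o next c) u)).
  by rewrite odd_count_addb count_comp_next ?addbb.
by move=> u; rewrite negb_eqb.
Qed.

Lemma card_agree_outside (T : finType) (c : seq T) (z : conf T) (P : pred (conf T)) :
  uniq c -> (forall p : conf T, (forall l, l \notin c -> p l = z l) -> P p) ->
  2 ^ size c <= #|[set p : conf T | P p]|.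
Proof.
move=> c_uniq P_agree.
pose fill (B : {set T}) : conf T := [ffun l => if l \in c then l \in B else z l].
have fill_inj : {in powerset [set u in c] &, injective fill}.
  move=> B1 B2; rewrite !powersetE => /subsetP B1c /subsetP B2c /ffunP fill_eq.
  apply/setP => l; move: (fill_eq l); rewrite !ffunE.
  case: ifP => [_ -> //| lc _].
  by apply/idP/idP => [/B1c | /B2c]; rewrite inE lc.
rewrite -(card_uniqP c_uniq) -[#|c|]cardsE -card_powerset -(card_in_imset fill_inj).
apply/subset_leq_card/subsetP => _ /imsetP[B _ ->]; rewrite inE.
by apply: P_agree => l lc; rewrite ffunE (negbTE lc).
Qed.

Section AndNets.
Variables (V : finType) (f : conf V -> conf V).
Hypothesis f_and : and_net f.

Definition lit (j i : V) (x : conf V) :=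
  (gpos f j i ==> x j) && (gneg f j i ==> ~~ x j).
Definition garc (j i : V) := gpos f j i || gneg f j i.
Definition lits_but (x : conf V) (j i : V) := [forall l, (l != j) ==> lit l i x].

Lemma and_netE x i : f x i = [forall j, lit j i x].
Proof.
rewrite f_and.2; apply: eq_forallb => j; rewrite /lit.
by case: (gpos f j i); case: (gneg f j i); case: (x j).
Qed.

Lemma and_net_split x j i : f x i = lit j i x && lits_but x j i.
Proof.
rewrite and_netE; apply/forallP/andP => [lits | [lit_j /forallP lits] l].
  by split=> //; apply/forallP => l; apply/implyP.
by have [-> //|l_j] := eqVneq l j; move: (lits l); rewrite l_j.
Qed.

Lemma lits_but_upd x j i b : lits_but (upd x j b) j i = lits_but x j i.
Proof.
apply: eq_forallb => l; have [//|l_j] := eqVneq l j.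
by rewrite /lit /upd ffunE (negbTE l_j).
Qed.

Lemma lneg_and_net x j i : lneg f x j i = gneg f j i && lits_but x j i.
Proof.
rewrite /lneg !(and_net_split _ j) !lits_but_upd /lit /upd !ffunE eqxx.
by move: (f_and.1 i j); case: (gpos f j i); case: (gneg f j i); case: lits_but.
Qed.

Lemma larc_and_net x j i : larc f x j i = garc j i && lits_but x j i.
Proof.
rewrite /larc lneg_and_net /lpos !(and_net_split _ j) !lits_but_upd /lit /upd !ffunE eqxx.
move: (f_and.1 i j); rewrite /garc.
by case: (gpos f j i); case: (gneg f j i); case: lits_but.
Qed.

Lemma lit_no_garc l i x : ~~ garc l i -> lit l i x.
Proof. by rewrite /garc /lit negb_or => /andP[/negbTE -> /negbTE ->]. Qed.

Lemma lit_neq_garc j i x y : lit j i x != lit j i y -> garc j i && (x j != y j).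
Proof.
by rewrite /lit /garc; case: (gpos f j i); case: (gneg f j i); case: (x j); case: (y j).
Qed.

Section TwoFixedPoints.
Variables x y : conf V.
Hypotheses (fx : f x = x) (fy : f y = y).

Definition diff_set := [set i | x i != y i].

Lemma diff_set_has_in_nbrs : has_in_nbrs garc diff_set.
Proof.
move=> i; rewrite inE => xy_i.
have : [exists j, lit j i x != lit j i y].
  apply: contraR xy_i => /existsPn lits_eq.
  rewrite -fx -fy !and_netE; apply/eqP; apply: eq_forallb => j.
  exact/eqP/negbNE/lits_eq.
case/existsP=> j /lit_neq_garc /andP[garc_ji xy_j].
by exists j; rewrite ?inE.
Qed.

Definition witness (i : V) : conf V := if x i then x else y.

Lemma witness_lit i l : i \in diff_set -> lit l i (witness i).
Proof.
rewrite inE => xy_i; have : f (witness i) i.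
  rewrite /witness; case: ifP => x_i; rewrite ?fx ?fy //.
  by move: xy_i; rewrite x_i; case: (y i).
by rewrite and_netE => /forallP.
Qed.

Lemma gneg_diff_set u i :
  u \in diff_set -> i \in diff_set -> garc u i -> gneg f u i = (x u != x i).
Proof.
move=> uD iD; have := witness_lit u iD; move: uD iD (f_and.1 i u).
rewrite /garc /lit /witness !inE.
by case: (gpos f u i); case: (gneg f u i); case: (x i); case: (y i); case: (x u); case: (y u).
Qed.

Section Frame.
Variable c : seq V.
Hypothesis c_good : good_cycle garc x diff_set c.

(* The choice made by [pick] is irrelevant by [uniform_entries]. *)
Definition frame : conf V :=
  [ffun l => if [pick i in c | garc l i] is Some i then witness i l else x l].

Variable p : conf V.
Hypothesis p_frame : forall l, l \notin c -> p l = frame l.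

Lemma frame_entry i l : i \in c -> l \notin c -> garc l i -> p l = witness i l.
Proof.
case: c_good => -[_ _ cD _] _ c_unif ic lc garc_li.
rewrite p_frame // ffunE; case: pickP => [i' /andP[i'c garc_li'] | /(_ i)]; last first.
  by rewrite ic garc_li.
have [lD | lnD] := boolP (l \in diff_set).
  by rewrite /witness (c_unif l i i' lD lc ic i'c garc_li garc_li').
by move: lnD; rewrite inE negbK /witness => /eqP xy_l; case: (x i); case: (x i').
Qed.

Lemma lits_but_next u : u \in c -> lits_but p u (next c u).
Proof.
case: c_good => -[_ c_uniq cD _] c_chordfree _ uc.
have next_uc : next c u \in c by rewrite mem_next.
apply/forallP => l; apply/implyP => l_u.
have [garc_l | /lit_no_garc //] := boolP (garc l (next c u)).
have lc : l \notin c.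
  apply: contra l_u => lc; have := c_chordfree l (next c u) lc; rewrite mem_next.
  by move=> /(_ uc garc_l) /(congr1 (prev c)); rewrite !prev_next // => ->.
rewrite /lit (frame_entry next_uc lc garc_l).
by have := witness_lit l (cD _ next_uc); rewrite /lit.
Qed.

Lemma has_chordless_pos_cycle_frame : has_chordless_pos_cycle f p (size c).
Proof.
case: c_good => -[c_gt0 c_uniq cD c_cycle] c_chordfree _.
apply/existsP; exists (in_tuple c); apply/and3P; split => /=.
- rewrite /is_cycle c_gt0 c_uniq /=; apply: cycle_from_next => // u uc.
  by rewrite larc_and_net lits_but_next // andbT (next_cycle c_cycle).
- rewrite /positive_cycle (eq_in_count (a2 := fun u => x u != x (next c u))).
    exact: even_count_next_change.
  move=> u uc; rewrite lneg_and_net lits_but_next // andbT.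
  by rewrite gneg_diff_set ?cD ?mem_next // (next_cycle c_cycle).
- apply/allP => u uc; apply/allP => v vc; apply/implyP.
  by rewrite larc_and_net => /andP[/(c_chordfree u v uc vc) ->].
Qed.

End Frame.
End TwoFixedPoints.
End AndNets.

Theorem corollary11 (V : finType) (f : conf V -> conf V) :
  0 < #|V| ->
  and_net f ->
  (forall k : nat, 1 <= k <= #|V| ->
     #|[set x : conf V | has_chordless_pos_cycle f x k]| <= 2 ^ k - 1) ->
  #|[set x : conf V | fixed_point f x]| <= 1.
Proof.
move=> _ f_and card_bound; rewrite leqNgt; apply/negP => /card_gt1P[x [y []]].
rewrite !inE /fixed_point => /eqP fx /eqP fy x_y.
have D0 : diff_set x y != set0.
  apply: contra x_y => /eqP D0; apply/eqP/ffunP => i; apply/eqP; apply: contraT => xy_i.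
  have : i \in diff_set x y by rewrite inE.
  by rewrite D0 inE.
have [c c_good] := exists_good_cycle x D0 (diff_set_has_in_nbrs f_and fx fy).
have [[c_gt0 c_uniq _ _] _ _] := c_good.
have c_size : 1 <= size c <= #|V| by rewrite c_gt0 -(card_uniqP c_uniq) max_card.
have := card_agree_outside c_uniq
  (has_chordless_pos_cycle_frame f_and fx fy c_good).
move=> /leq_trans/(_ (card_bound _ c_size)).
by rewrite leqNgt subn1 ltn_predL expn_gt0.
Qed.
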